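(* For each integer $r\ge1$, let $G_r=(K_2\cup(2r+1)K_1)\nabla(2r+1)K_1$ and $G'_r=(2r+1)K_1\nabla(2r+2)K_1\nabla K_1$, both of order $4r+4$. Then $LE(G_r)=LE(G'_r)=LE(K_{4r+4})=8r+6$ (both are $L$-borderenergetic), and neither $G_r$ nor $G'_r$ has the same Laplacian spectrum as $K_{4r+4}$.
   Context: All graphs are finite, simple and undirected. The Laplacian matrix of $G$ is $L(G)=D-A$ ($D$ degree matrix, $A$ adjacency matrix). For a graph $G$ on $n$ vertices with Laplacian eigenvalues $\mu_1,\dots,\mu_n$ and average degree $\overline d = 2|E(G)|/n$, the Laplacian energy is $LE(G)=\sum_{i=1}^n|\mu_i-\overline d|$. One has $LE(K_n)=2n-2$. A graph $G$ on $n$ vertices is $L$-borderenergetic if $LE(G)=LE(K_n)$. $K_m$ is the complete graph on $m$ vertices, $mG$ is the disjoint union of $m$ copies of $G$, $\cup$ is disjoint union, and the join $G_1\nabla G_2$ is obtained from $G_1\cup G_2$ by adding all edges between a vertex of $G_1$ and a vertex of $G_2$ (the join is associative). *)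

From HB Require Import structures.
From mathcomp Require Import all_boot all_order all_algebra all_field.
Set Implicit Arguments. Unset Strict Implicit. Unset Printing Implicit Defensive.
Import Order.TTheory GRing.Theory Num.Theory.
Local Open Scope ring_scope.

(* A graph: a finite vertex type with an adjacency relation.  All graphs
   built below are simple (symmetric, irreflexive adjacency). *)
Structure graph := Graph { vert :> finType; adj : rel vert }.
Arguments adj : clear implicits.

Definition K (m : nat) : graph := @Graph 'I_m (fun i j => i != j).

Definition copies (m : nat) (G : graph) : graph :=
  @Graph ('I_m * vert G)%type (fun x y => (x.1 == y.1) && adj G x.2 y.2).

Definition gunion (G1 G2 : graph) : graph :=
  @Graph (vert G1 + vert G2)%type (fun x y =>
    match x, y with
    | inl a, inl b => adj G1 a b
    | inr a, inr b => adj G2 a b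
    | _, _ => false
    end).

Definition gjoin (G1 G2 : graph) : graph :=
  @Graph (vert G1 + vert G2)%type (fun x y =>
    match x, y with
    | inl a, inl b => adj G1 a b
    | inr a, inr b => adj G2 a b
    | _, _ => true
    end).

Definition deg (G : graph) (v : G) : nat := #|[pred w | adj G v w]|.

Definition lap (G : graph) : 'M[algC]_#|G| :=
  \matrix_(i, j) ((if i == j then (deg (enum_val i))%:R else 0)
                  - (adj G (enum_val i) (enum_val j))%:R).

(* average degree 2|E|/n = (sum of degrees)/n *)
Definition avgdeg (G : graph) : algC :=
  (\sum_(v : G) deg v)%:R / #|G|%:R.

Definition lspec (G : graph) : seq algC :=
  sval (closed_field_poly_normal (char_poly (lap G))).

Definition LE (G : graph) : algC := \sum_(mu <- lspec G) `|mu - avgdeg G|.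

From HB Require Import structures.
From mathcomp Require Import all_boot all_order all_algebra all_field.
From mathcomp Require Import ring zify.
Set Implicit Arguments.
Unset Strict Implicit.
Unset Printing Implicit Defensive.
Import Order.TTheory GRing.Theory Num.Theory.
Local Open Scope ring_scope.

(* A family of k linearly independent (left) eigenvectors of the Laplacian for
   the eigenvalue l forces (X - l)^k to divide its characteristic polynomial;
   once the multiplicities found add up to the order of the graph, the
   spectrum is known.  Eigenvectors are built from those of the factors: an
   eigenvector of a factor orthogonal to the all-ones vector, extended by 0,
   remains one in a disjoint union (same eigenvalue) and in a join (eigenvalue
   shifted by the order of the other factor), and the vector equal to |G2| on
   G1 and to -|G1| on G2 is an eigenvector of G1 u G2 for 0 and of G1 V G2 for
   |G1| + |G2|.  This gives
     Spec G_r  = {0, (2r+1)^(2r+1), (2r+3)^(2r+1), 4r+4},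
     Spec G'_r = {0, (2r+2)^(2r+1), (2r+3)^(2r), (4r+4)^2},
   whereas Spec K_n = {0, n^(n-1)}.  The average degrees are 2r+2 and
   2r+3 - 1/(2r+2), and the Laplacian energies are then explicit sums. *)

Lemma prod_tally_seq (R : comPzSemiRingType) (T : eqType) (bs : seq (T * nat))
    (P : T -> R) :
  \prod_(z <- tally_seq bs) P z = \prod_(b <- bs) P b.1 ^+ b.2.
Proof.
elim: bs => [|b bs IH]; first by rewrite !big_nil.
rewrite /tally_seq /= big_cat -/(tally_seq bs) IH big_cons.
by rewrite big_nseq iter_mulr_1.
Qed.

Lemma sum_tally_seq (R : nmodType) (T : eqType) (bs : seq (T * nat))
    (P : T -> R) :
  \sum_(z <- tally_seq bs) P z = \sum_(b <- bs) P b.1 *+ b.2.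
Proof.
elim: bs => [|b bs IH]; first by rewrite !big_nil.
rewrite /tally_seq /= big_cat -/(tally_seq bs) IH big_cons.
by rewrite big_nseq iter_addr_0.
Qed.

Lemma big_option (R : nmodType) (I : finType) (F : option I -> R) :
  \sum_(i : option I) F i = F None + \sum_i F (Some i).
Proof.
rewrite ![index_enum _]unlock [@Finite.enum in LHS]unlock /=.
by rewrite big_cons big_map.
Qed.

Lemma sum_enum_val (R : nmodType) (T : finType) (g : T -> R) :
  \sum_(i < #|T|) g (enum_val i) = \sum_u g u.
Proof. by rewrite -big_enum_val. Qed.

Lemma sumr_const_mul (R : pzSemiRingType) (T : finType) (c : R) :
  \sum_(i : T) c = c * #|T|%:R.
Proof. by rewrite sumr_const mulr_natr. Qed.

Lemma normr_natB (R : numDomainType) (m n : nat) :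
  (n <= m)%N -> `|m%:R - n%:R : R| = (m - n)%:R.
Proof. by move=> nm; rewrite -natrB // normr_nat. Qed.

Section CharPoly.
Variable F : fieldType.

Lemma char_poly_similar n (P A : 'M[F]_n) : P \in unitmx ->
  char_poly (P *m A *m invmx P) = char_poly A.
Proof.
move=> uP; rewrite /char_poly /char_poly_mx.
have PP' : map_mx (@polyC F) P *m map_mx polyC (invmx P) = 1.
  by rewrite -map_mxM mulmxV // map_mx1.
have -> : 'X%:M - map_mx polyC (P *m A *m invmx P) =
   map_mx polyC P *m ('X%:M - map_mx polyC A) *m map_mx polyC (invmx P).
  rewrite !map_mxM mulmxBr mulmxBl mul_mx_scalar -scalemxAl -mul_mx_scalar.
  by rewrite PP' mul1mx.
rewrite !det_mulmx mulrC mulrA -det_mulmx.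
by rewrite -map_mxM mulVmx // map_mx1 det1 mul1r.
Qed.

(* Change basis so that the rows of [V] become the first [k] basis vectors:
   [A] becomes block lower triangular with upper-left block [a%:M]. *)
Lemma dvdp_char_poly_eigvecs n k (A : 'M[F]_n) (V : 'M[F]_(k, n)) a :
  row_free V -> V *m A = a *: V -> ('X - a%:P) ^+ k %| char_poly A.
Proof.
move=> freeV; have kn : (k <= n)%N by rewrite -(eqP freeV) rank_leq_col.
move: A V freeV; rewrite -(subnKC kn) => A V /eqP rkV VA.
set L := col_ebase V; set U := row_ebase V.
have uL : L \in unitmx by apply: col_ebase_unit.
have uU : U \in unitmx by apply: row_ebase_unit.
have eV : V = L *m pid_mx k *m U by rewrite -{1}(mulmx_ebase V) rkV.
set B := U *m A *m invmx U.
have pidB : (pid_mx k : 'M_(k, k + (n - k))) *m B = a *: pid_mx k.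
  have : invmx L *m (V *m A) *m invmx U = invmx L *m (a *: V) *m invmx U.
    by rewrite VA.
  rewrite eV /B -!scalemxAr -scalemxAl !mulmxA !mulVmx // !mul1mx mulmxK //.
have [ulB urB] : ulsubmx B = a%:M /\ ursubmx B = 0.
  move: pidB; rewrite pid_mx_row -{1}(submxK B) block_mxEv mul_row_col.
  by rewrite mul0mx addr0 scale_row_mx scaler0 mul1mx scalemx1 => /eq_row_mx.
rewrite -(char_poly_similar A uU) -/B /char_poly /char_poly_mx -(submxK B).
rewrite ulB urB (scalar_mx_block k (n - k)) map_block_mx opp_block_mx.
rewrite add_block_mx !(raddf0, subr0, sub0r) det_lblock map_scalar_mx.
by rewrite -(raddfB (@scalar_mx _ k)) det_scalar dvdp_mulIl.
Qed.

Lemma char_poly_tally n (A : 'M[F]_n) (bs : seq (F * nat)) :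
  uniq (unzip1 bs) ->
  (forall b, b \in bs -> ('X - b.1%:P) ^+ b.2 %| char_poly A) ->
  sumn (unzip2 bs) = n ->
  char_poly A = \prod_(z <- tally_seq bs) ('X - z%:P).
Proof.
move=> uniq_bs dvd_bs size_bs.
have dvdA : \prod_(b <- bs) ('X - b.1%:P) ^+ b.2 %| char_poly A.
  elim: bs uniq_bs dvd_bs {size_bs} => [|b bs IH].
    by rewrite big_nil dvd1p.
  move=> /= /andP[bNbs uniq_bs] dvd_bs; rewrite big_cons Gauss_dvdp; last first.
    rewrite big_seq; apply: (big_ind (coprimep _)) => [|p q|c cbs].
    - exact: coprimep1.
    - by rewrite coprimepMr => -> ->.
    apply/coprimep_expl/coprimep_expr/coprimep_XsubC2; rewrite subr_eq0.
    by apply: contraNneq bNbs => <-; apply: map_f.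
  by rewrite dvd_bs ?mem_head ?IH // => c cbs; rewrite dvd_bs // inE cbs orbT.
symmetry; apply/eqP; rewrite -eqp_monic ?monic_prod_XsubC ?char_poly_monic //.
rewrite prod_tally_seq -(dvdp_size_eqp dvdA).
rewrite -(prod_tally_seq _ (fun z => 'X - z%:P)) size_prod_XsubC.
by rewrite size_tally_seq size_bs size_char_poly.
Qed.

End CharPoly.

Section FreeFamilies.
Variable R : idomainType.

Definition free_fun (I T : finType) (fs : I -> T -> R) : Prop :=
  forall c : I -> R, (forall u, \sum_i c i * fs i u = 0) -> forall i, c i = 0.

Definition sumf (T1 T2 : Type) (f1 : T1 -> R) (f2 : T2 -> R) (x : T1 + T2) :=
  match x with inl a => f1 a | inr b => f2 b end.

Definition catf (I1 I2 T1 T2 : Type) (fs1 : I1 -> T1 -> R) (fs2 : I2 -> T2 -> R)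
    (i : I1 + I2) : T1 + T2 -> R :=
  match i with
  | inl i1 => sumf (fs1 i1) (fun=> 0)
  | inr i2 => sumf (fun=> 0) (fs2 i2)
  end.

Definition consf (I T : Type) (h : T -> R) (fs : I -> T -> R) (i : option I) :=
  if i is Some j then fs j else h.

Lemma free_fun_cat (I1 I2 T1 T2 : finType) (fs1 : I1 -> T1 -> R)
    (fs2 : I2 -> T2 -> R) :
  free_fun fs1 -> free_fun fs2 -> free_fun (catf fs1 fs2).
Proof.
move=> free1 free2 c c0 [i1|i2].
  apply: (free1 (c \o inl)) => a; have := c0 (inl a).
  by rewrite big_sumType /= [X in _ + X]big1 ?addr0 // => i _; rewrite mulr0.
apply: (free2 (c \o inr)) => b; have := c0 (inr b).
by rewrite big_sumType /= big1 ?add0r // => i _; rewrite mulr0.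
Qed.

(* Summing a vanishing combination over [A] kills every term but the one of
   [h], whose coefficient is therefore 0. *)
Lemma free_fun_cons (I T : finType) (h : T -> R) (fs : I -> T -> R)
    (A : {pred T}) :
  free_fun fs -> (forall i, \sum_(u in A) fs i u = 0) ->
  \sum_(u in A) h u != 0 -> free_fun (consf h fs).
Proof.
move=> freefs fsA hA c c0.
have cE u : c None * h u + \sum_i c (Some i) * fs i u = 0.
  by have := c0 u; rewrite big_option.
have cN : c None = 0.
  have : \sum_(u in A) (c None * h u + \sum_i c (Some i) * fs i u) = 0.
    by rewrite big1 // => u _; apply: cE.
  rewrite big_split /= -mulr_sumr exchange_big /= [X in _ + X]big1 => [|i _].
    by rewrite addr0 => /eqP; rewrite mulf_eq0 (negbTE hA) orbF => /eqP.
  by rewrite -mulr_sumr fsA mulr0.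
case=> [i|//]; apply: (freefs (c \o Some)) => u.
by have := cE u; rewrite cN mul0r add0r.
Qed.

Section SumZero.
Variables (I1 I2 T1 T2 : finType) (fs1 : I1 -> T1 -> R) (fs2 : I2 -> T2 -> R).
Hypotheses (sum_fs1 : forall i, \sum_u fs1 i u = 0)
  (sum_fs2 : forall i, \sum_u fs2 i u = 0).

Lemma sum_catf i : \sum_x catf fs1 fs2 i x = 0.
Proof.
by case: i => i; rewrite big_sumType /= big1_eq ?sum_fs1 ?sum_fs2 ?addr0 ?add0r.
Qed.

Lemma free_fun_cons_cat (h : T1 + T2 -> R) :
  free_fun fs1 -> free_fun fs2 -> \sum_a h (inl a) != 0 ->
  free_fun (consf h (catf fs1 fs2)).
Proof.
move=> free1 free2 hl.
pose A := [pred x : T1 + T2 | if x is inl _ then true else false].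
have sumA (g : T1 + T2 -> R) : \sum_(x in A) g x = \sum_a g (inl a).
  by rewrite big_sumType /= big_pred0_eq addr0.
apply: (free_fun_cons (A := A)); rewrite ?sumA //; first exact: free_fun_cat.
by case=> i; rewrite sumA /= ?sum_fs1 // big1_eq.
Qed.

End SumZero.

End FreeFamilies.

Section LaplacianEigenvectors.
Variable G : graph.

Lemma degE (v : G) : deg v = (\sum_u adj G v u)%N.
Proof.
rewrite /deg -sum1_card big_mkcond /=.
by apply: eq_bigr => u _; rewrite inE; case: adj.
Qed.

(* Eigenvectors of [lap G] acting on row vectors, i.e. [f *m lap G = l *: f]. *)
Definition lap_eigvec (f : G -> algC) (l : algC) : Prop :=
  forall w, (deg w)%:R * f w - \sum_u (adj G u w)%:R * f u = l * f w.

Lemma lap_eigvecs_dvd (I : finType) (fs : I -> G -> algC) l :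
  (forall i, lap_eigvec (fs i) l) -> free_fun fs ->
  ('X - l%:P) ^+ #|I| %| char_poly (lap G).
Proof.
move=> eig_fs free_fs.
pose V := \matrix_(i < #|I|, j < #|G|) fs (enum_val i) (enum_val j).
apply: (@dvdp_char_poly_eigvecs _ _ _ _ V).
  apply: inj_row_free => c cV0; apply/rowP => i; rewrite mxE -[i]enum_valK.
  apply: (free_fs (fun x => c 0 (enum_rank x))) => u.
  have := congr1 (fun M : 'rV_#|G| => M 0 (enum_rank u)) cV0.
  rewrite !mxE => cu; rewrite -{}[RHS]cu -sum_enum_val.
  by apply: eq_bigr => j _; rewrite enum_valK mxE enum_rankK.
apply/matrixP => i j; rewrite !mxE -(eig_fs (enum_val i)).
under eq_bigr => k _ do rewrite !mxE mulrBr.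
rewrite sumrB (bigD1 j) //= eqxx big1 ?addr0 => [|k /negPf->]; last first.
  by rewrite mulr0.
rewrite mulrC -[in RHS]sum_enum_val; congr (_ - _).
by apply: eq_bigr => k _; rewrite mulrC.
Qed.

Lemma lspec_tally (bs : seq (algC * nat)) :
  uniq (unzip1 bs) ->
  (forall b, b \in bs -> ('X - b.1%:P) ^+ b.2 %| char_poly (lap G)) ->
  sumn (unzip2 bs) = #|G| -> perm_eq (lspec G) (tally_seq bs).
Proof.
move=> uniq_bs dvd_bs size_bs; rewrite /lspec.
case: closed_field_poly_normal => s /= charE; apply: prod_XsubC_eq.
rewrite -(char_poly_tally uniq_bs dvd_bs size_bs) [RHS]charE.
by rewrite (monicP (char_poly_monic _)) scale1r.
Qed.

Lemma LE_tally (bs : seq (algC * nat)) : perm_eq (lspec G) (tally_seq bs) ->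
  LE G = \sum_(b <- bs) `|b.1 - avgdeg G| *+ b.2.
Proof. by move=> spec_bs; rewrite /LE (perm_big _ spec_bs) sum_tally_seq. Qed.

Lemma lap_eigvec_const c : symmetric (adj G) -> lap_eigvec (fun=> c) 0.
Proof.
move=> symG w; rewrite mul0r degE natr_sum mulr_suml -sumrB big1 // => u _.
by rewrite symG subrr.
Qed.

Lemma lap_dvdX : symmetric (adj G) -> (0 < #|G|)%N -> 'X %| char_poly (lap G).
Proof.
move=> symG /card_gt0P[v _].
have := lap_eigvecs_dvd (fun _ : unit => lap_eigvec_const 1 symG).
rewrite card_unit subr0 expr1; apply=> c c0 [].
by have := c0 v; rewrite (big_pred1 tt) // mulr1.
Qed.

End LaplacianEigenvectors.

Section GraphOperations.
Variables G1 G2 : graph.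

Lemma deg_unionl (a : G1) : deg (inl a : gunion G1 G2) = deg a.
Proof. by rewrite !degE big_sumType /= big1_eq addn0. Qed.

Lemma deg_unionr (b : G2) : deg (inr b : gunion G1 G2) = deg b.
Proof. by rewrite !degE big_sumType /= big1_eq. Qed.

Lemma deg_joinl (a : G1) : deg (inl a : gjoin G1 G2) = (deg a + #|G2|)%N.
Proof. by rewrite !degE big_sumType /= sum1_card. Qed.

Lemma deg_joinr (b : G2) : deg (inr b : gjoin G1 G2) = (deg b + #|G1|)%N.
Proof. by rewrite !degE big_sumType /= sum1_card addnC. Qed.

Lemma lap_eigvec_union f1 f2 l : lap_eigvec f1 l -> lap_eigvec f2 l ->
  @lap_eigvec (gunion G1 G2) (sumf f1 f2) l.
Proof.
move=> eig1 eig2 [a|b]; rewrite ?deg_unionl ?deg_unionr big_sumType /=.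
  by rewrite [X in _ - (_ + X)]big1 ?addr0 // => u _; rewrite mul0r.
by rewrite big1 ?add0r // => u _; rewrite mul0r.
Qed.

Lemma lap_eigvec_joinl f l : lap_eigvec f l -> \sum_u f u = 0 ->
  @lap_eigvec (gjoin G1 G2) (sumf f (fun=> 0)) (l + #|G2|%:R).
Proof.
move=> eig sum0 [a|b]; rewrite ?deg_joinl ?deg_joinr natrD big_sumType /=.
  rewrite [X in _ - (_ + X)]big1 ?addr0 => [|u _]; last by rewrite mulr0.
  by rewrite !mulrDl -eig addrAC.
rewrite (eq_bigr f) ?sum0 => [|u _]; last by rewrite mul1r.
by rewrite big1 ?add0r ?mulr0 ?subr0 // => u _; rewrite mulr0.
Qed.

Lemma lap_eigvec_joinr f l : lap_eigvec f l -> \sum_u f u = 0 ->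
  @lap_eigvec (gjoin G1 G2) (sumf (fun=> 0) f) (l + #|G1|%:R).
Proof.
move=> eig sum0 [a|b]; rewrite ?deg_joinl ?deg_joinr natrD big_sumType /=.
  rewrite [X in _ - (_ + X)](eq_bigr f) ?sum0 => [|u _]; last first.
    by rewrite mul1r.
  by rewrite big1 ?add0r ?mulr0 ?subr0 // => u _; rewrite mulr0.
rewrite big1 ?add0r => [|u _]; last by rewrite mulr0.
by rewrite !mulrDl -eig addrAC.
Qed.

Definition cross_vec : G1 + G2 -> algC :=
  sumf (fun=> #|G2|%:R) (fun=> - #|G1|%:R).

Lemma sum_cross_vec : \sum_x cross_vec x = 0.
Proof. by rewrite big_sumType /= !sumr_const_mul mulNr mulrC subrr. Qed.

Lemma sum_cross_vec_inl : (0 < #|G1|)%N -> (0 < #|G2|)%N ->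
  \sum_a cross_vec (inl a) != 0.
Proof.
by move=> n1 n2; rewrite sumr_const_mul mulf_neq0 // pnatr_eq0 -lt0n.
Qed.

Lemma lap_eigvec_union_cross : symmetric (adj G1) -> symmetric (adj G2) ->
  @lap_eigvec (gunion G1 G2) cross_vec 0.
Proof.
by move=> sym1 sym2; apply: lap_eigvec_union; apply: lap_eigvec_const.
Qed.

Lemma lap_eigvec_join_cross : symmetric (adj G1) -> symmetric (adj G2) ->
  @lap_eigvec (gjoin G1 G2) cross_vec (#|G1|%:R + #|G2|%:R).
Proof.
move=> sym1 sym2 [a|b]; rewrite ?deg_joinl ?deg_joinr natrD big_sumType /=.
  have /eqP := lap_eigvec_const #|G2|%:R sym1 a.
  rewrite mul0r subr_eq0 => /eqP <-.
  rewrite (eq_bigr (fun=> - #|G1|%:R)) => [|u _]; last by rewrite mul1r.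
  by rewrite sumr_const -mulr_natl; ring.
have /eqP := lap_eigvec_const (- #|G1|%:R) sym2 b.
rewrite mul0r subr_eq0 => /eqP <-.
rewrite (eq_bigr (fun=> #|G2|%:R)) => [|u _]; last by rewrite mul1r.
by rewrite sumr_const -mulr_natl; ring.
Qed.

End GraphOperations.

Lemma lap_eigvec0 (G : graph) l : @lap_eigvec G (fun=> 0) l.
Proof. by move=> w; rewrite !mulr0 big1 ?subr0 // => u _; rewrite mulr0. Qed.

(* Orthogonality to the all-ones vector is what lets eigenvectors of a factor
   survive a join. *)
Definition perp1_eigs (G : graph) (l : algC) (k : nat) : Prop :=
  exists (I : finType) (fs : I -> G -> algC),
    [/\ #|I| = k, forall i, lap_eigvec (fs i) l,
        forall i, \sum_u fs i u = 0 & free_fun fs].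

Lemma perp1_eigs_dvd G l k :
  perp1_eigs G l k -> ('X - l%:P) ^+ k %| char_poly (lap G).
Proof. by case=> I [fs [<- eig _ free]]; apply: lap_eigvecs_dvd. Qed.

Lemma perp1_eigs0 G l : perp1_eigs G l 0.
Proof.
by exists void, (fun=> fun=> 0); split=> [|[]|[]|c _ []]; rewrite ?card_void.
Qed.

Section JoinUnion.
Variables (G1 G2 : graph) (k1 k2 : nat).

Lemma perp1_eigs_union l : perp1_eigs G1 l k1 -> perp1_eigs G2 l k2 ->
  perp1_eigs (gunion G1 G2) l (k1 + k2).
Proof.
move=> [I1 [fs1 [card1 eig1 sum1 free1]]] [I2 [fs2 [card2 eig2 sum2 free2]]].
exists (I1 + I2)%type, (catf fs1 fs2); split.
- by rewrite card_sum card1 card2.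
- by case=> i; apply: lap_eigvec_union => //; apply: lap_eigvec0.
- exact: sum_catf.
- exact: free_fun_cat.
Qed.

Lemma perp1_eigs_join l1 l2 l :
  perp1_eigs G1 l1 k1 -> perp1_eigs G2 l2 k2 ->
  l1 + #|G2|%:R = l -> l2 + #|G1|%:R = l ->
  perp1_eigs (gjoin G1 G2) l (k1 + k2).
Proof.
move=> [I1 [fs1 [card1 eig1 sum1 free1]]] [I2 [fs2 [card2 eig2 sum2 free2]]].
move=> <- l2E.
exists (I1 + I2)%type, (catf fs1 fs2); split.
- by rewrite card_sum card1 card2.
- case=> i; first exact: lap_eigvec_joinl.
  by rewrite -l2E; apply: lap_eigvec_joinr.
- exact: sum_catf.
- exact: free_fun_cat.
Qed.

Lemma perp1_eigs_union_cross : symmetric (adj G1) -> symmetric (adj G2) ->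
  (0 < #|G1|)%N -> (0 < #|G2|)%N ->
  perp1_eigs G1 0 k1 -> perp1_eigs G2 0 k2 ->
  perp1_eigs (gunion G1 G2) 0 (k1 + k2).+1.
Proof.
move=> sym1 sym2 n1 n2.
move=> [I1 [fs1 [card1 eig1 sum1 free1]]] [I2 [fs2 [card2 eig2 sum2 free2]]].
exists (option (I1 + I2)), (consf (@cross_vec G1 G2) (catf fs1 fs2)); split.
- by rewrite card_option card_sum card1 card2.
- case=> [[i|i]|]; last exact: lap_eigvec_union_cross;
    by apply: lap_eigvec_union => //; apply: lap_eigvec0.
- by case=> [i|]; [apply: sum_catf | apply: sum_cross_vec].
- by apply: free_fun_cons_cat => //; apply: sum_cross_vec_inl.
Qed.

Lemma perp1_eigs_join_cross : symmetric (adj G1) -> symmetric (adj G2) ->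
  (0 < #|G1|)%N -> (0 < #|G2|)%N ->
  perp1_eigs G1 #|G1|%:R k1 -> perp1_eigs G2 #|G2|%:R k2 ->
  perp1_eigs (gjoin G1 G2) (#|G1|%:R + #|G2|%:R) (k1 + k2).+1.
Proof.
move=> sym1 sym2 n1 n2.
move=> [I1 [fs1 [card1 eig1 sum1 free1]]] [I2 [fs2 [card2 eig2 sum2 free2]]].
exists (option (I1 + I2)), (consf (@cross_vec G1 G2) (catf fs1 fs2)); split.
- by rewrite card_option card_sum card1 card2.
- case=> [[i|i]|]; last exact: lap_eigvec_join_cross.
    exact: lap_eigvec_joinl.
  by rewrite addrC; apply: lap_eigvec_joinr.
- by case=> [i|]; [apply: sum_catf | apply: sum_cross_vec].
- by apply: free_fun_cons_cat => //; apply: sum_cross_vec_inl.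
Qed.

End JoinUnion.

Lemma perp1_eigs_joinl G1 G2 l k :
  perp1_eigs G1 l k -> perp1_eigs (gjoin G1 G2) (l + #|G2|%:R) k.
Proof.
move=> eigs1; rewrite -[k]addn0.
apply: perp1_eigs_join eigs1
  (perp1_eigs0 _ (l + #|G2|%:R - #|G1|%:R)) _ _ => //.
exact: subrK.
Qed.

Lemma perp1_eigs_joinr G1 G2 l k :
  perp1_eigs G2 l k -> perp1_eigs (gjoin G1 G2) (l + #|G1|%:R) k.
Proof.
move=> eigs2; rewrite -[k]add0n.
apply: perp1_eigs_join
  (perp1_eigs0 _ (l + #|G1|%:R - #|G2|%:R)) eigs2 _ _ => //.
exact: subrK.
Qed.

Lemma perp1_eigs_sum0 (G : graph) l :
  (forall f : G -> algC, \sum_u f u = 0 -> lap_eigvec f l) ->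
  perp1_eigs G l #|G|.-1.
Proof.
move=> eig0; have [->|/card_gt0P[v0 _]] := posnP #|G|; first exact: perp1_eigs0.
have sum_eq1 (x : G) : \sum_u (u == x)%:R = 1 :> algC.
  by rewrite (bigD1 x) //= eqxx big1 ?addr0 // => u /negbTE->.
pose fs (i : {x : G | x != v0}) (u : G) : algC :=
  (u == val i)%:R - (u == v0)%:R.
have sum_fs i : \sum_u fs i u = 0 by rewrite sumrB !sum_eq1 subrr.
exists {x : G | x != v0}, fs; split=> [|i|//|c c0 i].
- by rewrite card_sig cardC1.
- exact/eig0/sum_fs.
have := c0 (val i); rewrite (bigD1 i) //= /fs eqxx (negbTE (valP i)).
rewrite subr0 mulr1 big1 ?addr0 // => j ji; rewrite subr0 val_eqE eq_sym.
by rewrite (negbTE ji) mulr0.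
Qed.

Lemma deg_K m (w : K m) : (deg w).+1 = m.
Proof.
rewrite -[RHS](card_ord m) [RHS](cardD1 w) inE add1n /deg; congr _.+1.
by apply: eq_card => u; rewrite !inE andbT eq_sym.
Qed.

Lemma perp1_eigs_K m : perp1_eigs (K m) m%:R m.-1.
Proof.
rewrite -[in m.-1](card_ord m); apply: perp1_eigs_sum0 => f sum0 w.
rewrite (bigD1 w) //= eqxx mul0r add0r (eq_bigr f) => [|u uw]; last first.
  by rewrite uw mul1r.
move/eqP: sum0; rewrite (bigD1 w) //= addrC addr_eq0 => /eqP ->.
by rewrite opprK -[in RHS](deg_K w) -addn1 natrD mulrDl mul1r.
Qed.

Lemma perp1_eigs_edgeless (G : graph) : (forall u v, ~~ adj G u v) ->
  perp1_eigs G 0 #|G|.-1.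
Proof.
move=> noedge; apply: perp1_eigs_sum0 => f _ w.
rewrite degE !big1 ?mul0r ?subr0 // => u _.
  by rewrite (negbTE (noedge u w)) mul0r.
by rewrite (negbTE (noedge w u)).
Qed.

Lemma symmetric_K {m} : symmetric (adj (K m)).
Proof. by move=> u v /=; rewrite eq_sym. Qed.

Lemma symmetric_copies m G : symmetric (adj G) -> symmetric (adj (copies m G)).
Proof. by move=> symG u v /=; rewrite eq_sym symG. Qed.

Lemma symmetric_union G1 G2 :
  symmetric (adj G1) -> symmetric (adj G2) -> symmetric (adj (gunion G1 G2)).
Proof. by move=> sym1 sym2 [a|b] [a'|b'] /=. Qed.

Lemma symmetric_join G1 G2 :
  symmetric (adj G1) -> symmetric (adj G2) -> symmetric (adj (gjoin G1 G2)).
Proof. by move=> sym1 sym2 [a|b] [a'|b'] /=. Qed.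

Lemma card_K m : #|K m| = m.
Proof. exact: card_ord. Qed.

Lemma card_copies m G : #|copies m G| = (m * #|G|)%N.
Proof. by rewrite card_prod card_ord. Qed.

Lemma card_union G1 G2 : #|gunion G1 G2| = (#|G1| + #|G2|)%N.
Proof. exact: card_sum. Qed.

Lemma card_join G1 G2 : #|gjoin G1 G2| = (#|G1| + #|G2|)%N.
Proof. exact: card_sum. Qed.

Lemma symmetric_copies_K1 {m} : symmetric (adj (copies m (K 1))).
Proof. exact/symmetric_copies/symmetric_K. Qed.

Lemma card_copies_K1 m : #|copies m (K 1)| = m.
Proof. by rewrite card_copies card_K muln1. Qed.

Lemma copies_K1_edgeless m (u v : copies m (K 1)) : ~~ adj _ u v.
Proof. by case: u v => a i [b j]; rewrite /= (ord1 i) (ord1 j) eqxx andbF. Qed.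

Lemma sum_deg_union G1 G2 :
  (\sum_(v : gunion G1 G2) deg v = \sum_(v : G1) deg v + \sum_(v : G2) deg v)%N.
Proof.
rewrite big_sumType /=; congr addn; apply: eq_bigr => v _.
  exact: deg_unionl.
exact: deg_unionr.
Qed.

Lemma sum_deg_join G1 G2 : (\sum_(v : gjoin G1 G2) deg v =
  \sum_(v : G1) deg v + \sum_(v : G2) deg v + 2 * (#|G1| * #|G2|))%N.
Proof.
rewrite big_sumType /=.
under eq_bigr => v _ do rewrite deg_joinl.
under [X in (_ + X)%N]eq_bigr => v _ do rewrite deg_joinr.
have cardT (T : finType) : #|(xpredT : pred T)| = #|T| by apply: eq_card.
by rewrite !big_split /= !sum_nat_const !cardT; lia.
Qed.

Lemma sum_deg_K m : (\sum_(v : K m) deg v = m * m.-1)%N.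
Proof.
rewrite (eq_bigr (fun=> m.-1)) => [|v _]; last by rewrite -[m in RHS](deg_K v).
by rewrite sum_nat_const card_ord.
Qed.

Lemma sum_deg_edgeless (G : graph) : (forall u v, ~~ adj G u v) ->
  (\sum_(v : G) deg v = 0)%N.
Proof.
move=> noedge; apply: big1 => v _; rewrite degE big1 // => u _.
by rewrite (negbTE (noedge v u)).
Qed.

Definition spec_K (n : nat) : seq (algC * nat) := [:: (0, 1%N); (n%:R, n.-1)].

Lemma lspec_K n : (0 < n)%N -> perm_eq (lspec (K n)) (tally_seq (spec_K n)).
Proof.
move=> n0; apply: lspec_tally.
- by rewrite /= inE eq_sym pnatr_eq0 -lt0n n0.
- move=> b; rewrite !inE => /orP[] /eqP->.
    rewrite polyC0 subr0 expr1; apply: lap_dvdX; last by rewrite card_K.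
    exact: symmetric_K.
  exact/perp1_eigs_dvd/perp1_eigs_K.
- by rewrite /= card_K; lia.
Qed.

Lemma avgdeg_K n : (0 < n)%N -> avgdeg (K n) = n.-1%:R.
Proof.
move=> n0; rewrite /avgdeg sum_deg_K card_K natrM mulrAC divff ?mul1r //.
by rewrite pnatr_eq0 -lt0n.
Qed.

Lemma LE_K n : (0 < n)%N -> LE (K n) = (2 * n.-1)%:R.
Proof.
move=> n0; rewrite (LE_tally (lspec_K n0)) avgdeg_K //= !big_cons big_nil /=.
have -> : n%:R - n.-1%:R = 1 :> algC.
  by rewrite -[n in n%:R](prednK n0) mulrS addrK.
by rewrite addr0 sub0r normrN normr1 normr_nat -natrD addnn mul2n.
Qed.

Lemma not_cospectral_K (G : graph) n x : (0 < n)%N ->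
  x \in lspec G -> x != 0 -> x != n%:R -> ~ perm_eq (lspec G) (lspec (K n)).
Proof.
move=> n0 xG x0 xn /perm_mem eqG; move: xG.
rewrite eqG (perm_mem (lspec_K n0)) /= !inE cats0 mem_nseq (negbTE x0) /=.
by rewrite (negbTE xn) andbF.
Qed.

Lemma perp1_eigs_copies_K1 m : perp1_eigs (copies m.+1 (K 1)) 0 m.
Proof.
have := perp1_eigs_edgeless (@copies_K1_edgeless m.+1).
by rewrite card_copies_K1.
Qed.

Section Graphs.
Variable r : nat.
Local Notation mK1 m := (copies m (K 1)).

Definition Gr := gjoin (gunion (K 2) (mK1 (2 * r + 1))) (mK1 (2 * r + 1)).

Definition Gr' := gjoin (gjoin (mK1 (2 * r + 1)) (mK1 (2 * r + 2))) (K 1).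

Local Notation H := (gunion (K 2) (mK1 (2 * r + 1))).
Local Notation J := (gjoin (mK1 (2 * r + 1)) (mK1 (2 * r + 2))).

Let symmetric_H : symmetric (adj H).
Proof. exact: symmetric_union symmetric_K symmetric_copies_K1. Qed.

Let symmetric_J : symmetric (adj J).
Proof. exact: symmetric_join symmetric_copies_K1 symmetric_copies_K1. Qed.

Let card_H : #|H| = (2 * r + 3)%N.
Proof. by rewrite card_union card_K card_copies_K1; lia. Qed.

Let card_J : #|J| = (4 * r + 3)%N.
Proof. by rewrite card_join !card_copies_K1; lia. Qed.

Lemma card_Gr : #|Gr| = (4 * r + 4)%N.
Proof. by rewrite card_join card_H card_copies_K1; lia. Qed.

Lemma card_Gr' : #|Gr'| = (4 * r + 4)%N.
Proof. by rewrite card_join card_J card_K; lia. Qed.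

Let perp1_eigs_mK1_2r : perp1_eigs (mK1 (2 * r + 1)) 0 (2 * r).
Proof. by rewrite addn1; apply: perp1_eigs_copies_K1. Qed.

Let perp1_eigs_mK1_2r1 : perp1_eigs (mK1 (2 * r + 2)) 0 (2 * r + 1).
Proof. by rewrite addn2 addn1; apply: perp1_eigs_copies_K1. Qed.

Lemma perp1_eigs_Gr_top : perp1_eigs Gr (4 * r + 4)%:R 1.
Proof.
rewrite -card_Gr card_join natrD.
apply: perp1_eigs_join_cross symmetric_H symmetric_copies_K1 _ _
  (perp1_eigs0 _ _) (perp1_eigs0 _ _); first by rewrite card_H addn3.
by rewrite card_copies_K1 addn1.
Qed.

Lemma perp1_eigs_Gr_2r3 : perp1_eigs Gr (2 * r + 3)%:R (2 * r + 1).
Proof.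
rewrite [X in perp1_eigs _ _ X]addnC.
apply: (perp1_eigs_join (l1 := 2%:R) (l2 := 0)).
- exact: perp1_eigs_union (perp1_eigs_K 2) (perp1_eigs0 _ _).
- exact: perp1_eigs_mK1_2r.
- by rewrite card_copies_K1 -natrD; congr _%:R; lia.
- by rewrite add0r card_H.
Qed.

Lemma perp1_eigs_Gr_2r1 : perp1_eigs Gr (2 * r + 1)%:R (2 * r + 1).
Proof.
have -> : (2 * r + 1)%:R = 0 + #|mK1 (2 * r + 1)|%:R :> algC.
  by rewrite add0r card_copies_K1.
rewrite [X in perp1_eigs _ _ X]addn1; apply: perp1_eigs_joinl.
apply: (perp1_eigs_union_cross (k1 := 0) symmetric_K symmetric_copies_K1 _ _
  (perp1_eigs0 _ _) perp1_eigs_mK1_2r); first by rewrite card_K.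
by rewrite card_copies_K1 addn1.
Qed.

Lemma perp1_eigs_Gr'_top : perp1_eigs Gr' (4 * r + 4)%:R 2.
Proof.
rewrite -card_Gr' card_join natrD.
apply: (perp1_eigs_join_cross (k1 := 1) (k2 := 0) symmetric_J symmetric_K
  _ _ _ (perp1_eigs0 _ _)); [by rewrite card_J addn3 | by rewrite card_K |].
rewrite card_join natrD.
apply: perp1_eigs_join_cross symmetric_copies_K1 symmetric_copies_K1 _ _
  (perp1_eigs0 _ _) (perp1_eigs0 _ _); first by rewrite card_copies_K1 addn1.
by rewrite card_copies_K1 addn2.
Qed.

Lemma perp1_eigs_Gr'_2r3 : perp1_eigs Gr' (2 * r + 3)%:R (2 * r).
Proof.
have -> : (2 * r + 3)%:R = 0 + #|mK1 (2 * r + 2)|%:R + #|K 1|%:R :> algC.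
  by rewrite card_copies_K1 card_K add0r -natrD; congr _%:R; lia.
apply/perp1_eigs_joinl/perp1_eigs_joinl; exact: perp1_eigs_mK1_2r.
Qed.

Lemma perp1_eigs_Gr'_2r2 : perp1_eigs Gr' (2 * r + 2)%:R (2 * r + 1).
Proof.
have -> : (2 * r + 2)%:R = 0 + #|mK1 (2 * r + 1)|%:R + #|K 1|%:R :> algC.
  by rewrite card_copies_K1 card_K add0r -natrD; congr _%:R; lia.
apply/perp1_eigs_joinl/perp1_eigs_joinr; exact: perp1_eigs_mK1_2r1.
Qed.

Definition spec_Gr : seq (algC * nat) :=
  [:: (0, 1%N); ((4 * r + 4)%:R, 1%N); ((2 * r + 3)%:R, (2 * r + 1)%N);
      ((2 * r + 1)%:R, (2 * r + 1)%N)].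

Definition spec_Gr' : seq (algC * nat) :=
  [:: (0, 1%N); ((4 * r + 4)%:R, 2%N); ((2 * r + 3)%:R, (2 * r)%N);
      ((2 * r + 2)%:R, (2 * r + 1)%N)].

Lemma lspec_Gr : perm_eq (lspec Gr) (tally_seq spec_Gr).
Proof.
apply: lspec_tally; last by rewrite card_Gr /=; lia.
  rewrite /= !inE -[0 : algC]/(0%:R) !eqr_nat andbT.
  by repeat (apply/andP; split); apply/eqP; lia.
move=> b; rewrite !inE => /or4P[] /eqP-> /=.
- rewrite polyC0 subr0 expr1.
  apply: (@lap_dvdX Gr); last by rewrite card_Gr addn4.
  exact: symmetric_join symmetric_H symmetric_copies_K1.
- exact: perp1_eigs_dvd perp1_eigs_Gr_top.
- exact: perp1_eigs_dvd perp1_eigs_Gr_2r3.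
- exact: perp1_eigs_dvd perp1_eigs_Gr_2r1.
Qed.

Lemma lspec_Gr' : perm_eq (lspec Gr') (tally_seq spec_Gr').
Proof.
apply: lspec_tally; last by rewrite card_Gr' /=; lia.
  rewrite /= !inE -[0 : algC]/(0%:R) !eqr_nat andbT.
  by repeat (apply/andP; split); apply/eqP; lia.
move=> b; rewrite !inE => /or4P[] /eqP-> /=.
- rewrite polyC0 subr0 expr1.
  apply: (@lap_dvdX Gr'); last by rewrite card_Gr' addn4.
  exact: symmetric_join symmetric_J symmetric_K.
- exact: perp1_eigs_dvd perp1_eigs_Gr'_top.
- exact: perp1_eigs_dvd perp1_eigs_Gr'_2r3.
- exact: perp1_eigs_dvd perp1_eigs_Gr'_2r2.
Qed.

Lemma avgdeg_Gr : avgdeg Gr = (2 * r + 2)%:R.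
Proof.
have sum_deg : (\sum_(v : Gr) deg v = (2 * r + 2) * (4 * r + 4))%N.
  rewrite sum_deg_join sum_deg_union sum_deg_K !sum_deg_edgeless;
    try exact: copies_K1_edgeless.
  by rewrite card_union card_K !card_copies_K1; nia.
by rewrite /avgdeg sum_deg card_Gr natrM mulfK // pnatr_eq0 addn4.
Qed.

Lemma avgdeg_Gr' : avgdeg Gr' = (2 * r + 3)%:R - (2 * r + 2)%:R^-1.
Proof.
have sum_deg : (\sum_(v : Gr') deg v + 2 = 2 * (2 * r + 2) * (2 * r + 3))%N.
  rewrite !sum_deg_join sum_deg_K !sum_deg_edgeless;
    try exact: copies_K1_edgeless.
  by rewrite card_join card_K !card_copies_K1; nia.
have sumE : (\sum_(v : Gr') deg v)%:R =
    2 * (2 * r + 2)%:R * (2 * r + 3)%:R - 2 :> algC.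
  by apply: (addIr 2); rewrite subrK -natrD sum_deg !natrM.
rewrite /avgdeg sumE card_Gr'; field.
by rewrite -!natrM -!natrD !pnatr_eq0 addn2 addn4.
Qed.

Lemma LE_Gr : LE Gr = (8 * r + 6)%:R.
Proof.
rewrite (LE_tally lspec_Gr) avgdeg_Gr !big_cons big_nil /= addr0 sub0r normrN.
rewrite normr_nat (distrC (2 * r + 1)%:R) !normr_natB; try lia.
by rewrite -!mulrnA -!natrD; congr _%:R; lia.
Qed.

Lemma LE_Gr' : LE Gr' = (8 * r + 6)%:R.
Proof.
rewrite (LE_tally lspec_Gr') avgdeg_Gr' !big_cons big_nil /= addr0 sub0r normrN.
set q : algC := (2 * r + 2)%:R^-1.
have q_ge0 : 0 <= q by rewrite invr_ge0 ler0n.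
have q_le1 : q <= 1 by rewrite invf_le1 ?ltr0n ?ler1n addn2.
have -> : (4 * r + 4)%:R - ((2 * r + 3)%:R - q) = (2 * r + 1)%:R + q by ring.
have -> : (2 * r + 3)%:R - ((2 * r + 3)%:R - q) = q by ring.
have -> : (2 * r + 2)%:R - ((2 * r + 3)%:R - q) = - (1 - q) by ring.
rewrite normrN !ger0_norm ?subr_ge0 ?addr_ge0 ?ler0n //; last first.
  by rewrite (le_trans q_le1) // ler1n addn3.
by rewrite /q; field; rewrite -natrM -natrD pnatr_eq0 addn2.
Qed.

End Graphs.

Theorem theorem4 (r : nat) (hr : (1 <= r)%N) :
  let Gr := gjoin (gunion (K 2) (copies (2 * r + 1) (K 1)))
                  (copies (2 * r + 1) (K 1)) in
  let G'r := gjoin (gjoin (copies (2 * r + 1) (K 1)) (copies (2 * r + 2) (K 1)))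
                   (K 1) in
  let Kn := K (4 * r + 4) in
  [/\ #|Gr| = (4 * r + 4)%N, #|G'r| = (4 * r + 4)%N,
      LE Gr = LE Kn, LE G'r = LE Kn & LE Kn = (8 * r + 6)%:R ] /\
  ~ perm_eq (lspec Gr) (lspec Kn) /\ ~ perm_eq (lspec G'r) (lspec Kn).
Proof.
rewrite -/(Gr r) -/(Gr' r) /=.
have n0 : (0 < 4 * r + 4)%N by rewrite addn4.
have LE_Kn : LE (K (4 * r + 4)) = (8 * r + 6)%:R.
  by rewrite LE_K //; congr _%:R; lia.
split; first by split; rewrite ?card_Gr ?card_Gr' ?LE_Gr ?LE_Gr' ?LE_Kn.
split; [apply: (not_cospectral_K (x := (2 * r + 1)%:R) n0)
       | apply: (not_cospectral_K (x := (2 * r + 2)%:R) n0)].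
- rewrite (perm_mem (lspec_Gr r)) /= !(inE, mem_cat, mem_nseq) eqxx.
  by rewrite addn1 !orbT.
- by rewrite pnatr_eq0 addn1.
- by rewrite eqr_nat; apply/eqP; lia.
- rewrite (perm_mem (lspec_Gr' r)) /= !(inE, mem_cat, mem_nseq) eqxx.
  by rewrite addn1 !orbT.
- by rewrite pnatr_eq0 addn2.
- by rewrite eqr_nat; apply/eqP; lia.
Qed.
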